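(* Assume $X$ satisfies condition (P). Then for all $x\in W_c$ and $w\in W\setminus W_c$, $$\sum_{x\le y\le w}D_{x,y}\,P_{y,w}=0.$$
   Context: Let $X$ be a Coxeter graph with Coxeter system $(W,S)$, length function $\ell$, Bruhat order $\le$, identity $e$; write $\varepsilon_w=(-1)^{\ell(w)}$ and $\ell(x,w)=\ell(w)-\ell(x)$. An element of $W$ is fully commutative if any two of its reduced expressions are related by a sequence of moves $ss'\leftrightarrow s's$ with $s,s'\in S$ commuting; $W_c$ denotes the set of fully commutative elements, $[x,w]_c=\{y\in W_c:x\le y\le w\}$ and $(x,w)_c=\{y\in W_c:x<y<w\}$. $\mathcal H$ is the Hecke algebra of $W$ over $\mathcal A=\mathbb Z[q^{1/2},q^{-1/2}]$ with basis $\{T_w\}_{w\in W}$ and multiplication $T_wT_s=T_{ws}$ if $\ell(ws)>\ell(w)$, $T_wT_s=qT_{ws}+(q-1)T_w$ if $\ell(ws)<\ell(w)$. $J$ is the two-sided ideal generated by the elements $\sum_{w\in\langle s,s'\rangle}T_w$ for all pairs of non-commuting $s,s'\in S$ such that $ss'$ has finite order; $TL(X)=\mathcal H/J$, $\sigma:\mathcal H\to TL(X)$ the projection, $t_w=\sigma(T_w)$. $\{t_w:w\in W_c\}$ is an $\mathcal A$-basis of $TL(X)$; for $w\in W$ the polynomials $D_{x,w}\in\mathbb Z[q]$ ($x\in W_c$) are defined by $t_w=\sum_{x\in W_c,\,x\le w}D_{x,w}t_x$, with $D_{x,w}=0$ if $x\not\le w$ (so $D_{x,w}=\delta_{x,w}$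 when $w\in W_c$). Let $\iota$ be the ring involution of $\mathcal H$ with $\iota(q^{1/2})=q^{-1/2}$, $\iota(T_w)=(T_{w^{-1}})^{-1}$; it preserves $J$ and so induces an involution of $TL(X)$. $R_{x,w}$ are the $R$-polynomials, defined by $(T_{w^{-1}})^{-1}=\varepsilon_wq^{-\ell(w)}\sum_{x\le w}\varepsilon_xR_{x,w}T_x$, and $P_{x,w}$ are the Kazhdan–Lusztig polynomials, so that $C'_w=q^{-\ell(w)/2}\sum_{x\le w}P_{x,w}T_x$ is $\iota$-invariant, $P_{w,w}=1$, $\deg P_{x,w}\le(\ell(x,w)-1)/2$ for $x<w$. For $w\in W_c$, the polynomials $a_{y,w}\in\mathbb Z[q]$ ($y\in W_c$) are defined by $\iota(t_w)=(t_{w^{-1}})^{-1}=q^{-\ell(w)}\sum_{y\in W_c,\,y\le w}a_{y,w}t_y$, $a_{y,w}=0$ if $y\not\le w$. Let $p\mapsto\overline p$ be the ring involution of $\mathbb Z[q^{1/2},q^{-1/2}]$ with $q^{1/2}\mapsto q^{-1/2}$. For $w\in W_c$, $\{L_{x,w}\}_{x\in W_c}$ is the unique family in $\mathbb Z[q^{-1/2}]$ with $L_{x,w}=0$ if $x\not\le w$, $L_{w,w}=1$, $L_{x,w}\in q^{-1/2}\mathbb Z[q^{-1/2}]$ if $x<w$, and $L_{x,w}=\sum_{y\in[x,w]_c}q^{(\ell(x)-\ell(y))/2}a_{x,y}\,\overline{L_{y,w}}$; set $c_w=\sum_{x\in W_c,\,x\le w}q^{-\ell(x)/2}L_{x,w}t_x$.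 Condition (P) on $X$: $\sigma(C'_w)=c_w$ for all $w\in W_c$ and $\sigma(C'_w)=0$ for all $w\in W\setminus W_c$. (For finite irreducible or affine $X$, this holds exactly when $X$ has no vertex adjacent to three or more vertices and $X\neq\widetilde F_4$; in particular types $A$, $B$, $F_4$, $H_3$, $H_4$, $I_2(m)$.) *)

From HB Require Import structures.
From mathcomp Require Import all_boot all_order all_algebra.
From Stdlib Require Import ClassicalEpsilon Relations.
Set Implicit Arguments. Unset Strict Implicit. Unset Printing Implicit Defensive.
Import GRing.Theory.

Definition pbool (P : Prop) : bool :=
  if excluded_middle_informative P then true else false.

(* Sum of a finitely supported family F : I -> M over a (possibly infinite)
   index type I.  If the support of F is finite, this is the usual sum
   \sum_{y} F y; (it is 0 by convention otherwise, a case that never occurs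
   in the statement, since all sums there are over Bruhat intervals or
   finite dihedral subgroups). *)
Section Finsum.
Local Open Scope ring_scope.
Variables (I : eqType) (M : nmodType).
Definition fin_support_seq (F : I -> M) (s : seq I) : Prop :=
  uniq s /\ forall y, F y != 0 -> y \in s.
Definition fsum (F : I -> M) : M :=
  let s := epsilon (inhabits [::]) (fin_support_seq F) in
  if pbool (fin_support_seq F s) then \sum_(y <- s) F y else 0.
End Finsum.

Section Coxeter.
Local Open Scope group_scope.
Variables (S : finType) (W : groupType) (gen : S -> W).

Definition wprod (s : seq S) : W := foldr (fun a w => gen a * w) 1 s.

(* Coxeter matrix of a Coxeter graph X on the vertex set S:
   m s s = 1, m s t = m t s >= 2 for s <> t, with m s t = 0 encoding
   m(s,t) = infinity (label infinity in the graph); m s t = 2 iff s,t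
   are not joined in X, m s t = 3 for an unlabelled edge, etc. *)
Definition coxeter_matrix (m : S -> S -> nat) : Prop :=
  [/\ forall s, m s s = 1%N, forall s t, m s t = m t s &
      forall s t, s != t -> m s t != 1%N].

Definition satisfies_relations (G : groupType) (m : S -> S -> nat)
    (f : S -> G) : Prop :=
  forall s t, m s t != 0%N -> (f s * f t) ^+ (m s t) = 1.

(* (W, gen(S)) is the Coxeter system of the Coxeter graph with matrix m:
   W is the group presented by generators S and the Coxeter relations. *)
Definition coxeter_system (m : S -> S -> nat) : Prop :=
  [/\ coxeter_matrix m, satisfies_relations m gen,
      (forall w : W, exists s : seq S, w = wprod s) &
      (forall (G : groupType) (f : S -> G), satisfies_relations m f ->
         exists phi : W -> G,
           (forall x y, phi (x * y) = phi x * phi y) /\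
           (forall s, phi (gen s) = f s))].

Definition is_word_of (w : W) (n : nat) : Prop :=
  exists s : seq S, size s = n /\ wprod s = w.
Definition len (w : W) : nat :=
  epsilon (inhabits 0%N)
    (fun n => is_word_of w n /\ forall k, is_word_of w k -> (n <= k)%N).

Definition reduced_expr (w : W) (s : seq S) : Prop :=
  wprod s = w /\ size s = len w.

Inductive comm_move : seq S -> seq S -> Prop :=
  | CommMove (l r : seq S) (a b : S) :
      gen a * gen b = gen b * gen a ->
      comm_move (l ++ a :: b :: r) (l ++ b :: a :: r).

Definition comm_equiv : seq S -> seq S -> Prop :=
  clos_refl_trans (seq S) comm_move.

Definition fully_commutative (w : W) : Prop :=
  forall s1 s2, reduced_expr w s1 -> reduced_expr w s2 -> comm_equiv s1 s2.

Definition reflection (t : W) : Prop :=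
  exists (u : W) (s : S), t = u * gen s * u^-1.
Definition bruhat_step (x y : W) : Prop :=
  exists t, reflection t /\ y = x * t /\ (len x < len y)%N.
Definition bruhat_le : W -> W -> Prop := clos_refl_trans W bruhat_step.

Definition in_subgroup2 (s t : S) (w : W) : Prop :=
  exists l : seq S, (forall a, a \in l -> (a == s) || (a == t)) /\ wprod l = w.

Definition J_pair (st : S * S) : Prop :=
  gen st.1 * gen st.2 != gen st.2 * gen st.1 /\
  exists n, (0 < n)%N /\ (gen st.1 * gen st.2) ^+ n = 1.

End Coxeter.

Section Hecke.
Local Open Scope ring_scope.

Variable (A : comUnitRingType) (v : A).  (* v plays the role of q^{1/2} *)

Definition evq (p : {poly int}) : A := (map_poly intr p).[v ^+ 2].
Definition evv (p : {poly int}) : A := (map_poly intr p).[v].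
Definition evu (p : {poly int}) : A := (map_poly intr p).[v^-1].

(* (A, v) is (isomorphic to) Z[q^{1/2}, q^{-1/2}] with q^{1/2} = v *)
Definition laurent_ring : Prop :=
  [/\ v \is a GRing.unit,
      (forall p : {poly int}, evv p = 0 -> p = 0) &
      (forall a : A, exists (p : {poly int}) (n : nat), a = evv p * v ^- n)].

Definition is_basis_on (I : eqType) (Pw : I -> Prop) (M : lmodType A)
    (t : I -> M) : Prop :=
  (forall (s : seq I) (c : I -> A), uniq s -> (forall y, y \in s -> Pw y) ->
      \sum_(y <- s) c y *: t y = 0 -> forall y, y \in s -> c y = 0) /\
  (forall z : M, exists (s : seq I) (c : I -> A),
      (forall y, y \in s -> Pw y) /\ z = \sum_(y <- s) c y *: t y).

Variables (S : finType) (W : groupType) (gen : S -> W).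
Variables (H : algType A) (T : W -> H).

Definition is_hecke_algebra : Prop :=
  [/\ is_basis_on (fun _ => True) T, T 1%g = 1,
      (forall w s, (len gen w < len gen (w * gen s)%g)%N ->
          T w * T (gen s) = T (w * gen s)%g) &
      (forall w s, (len gen (w * gen s)%g < len gen w)%N ->
          T w * T (gen s) = v ^+ 2 *: T (w * gen s)%g + (v ^+ 2 - 1) *: T w)].

Definition is_iota (bar : A -> A) (iota : H -> H) : Prop :=
  (forall (a : A) (h : H), iota (a *: h) = bar a *: iota h) /\
  (forall w, iota (T w) * T (w^-1)%g = 1 /\ T (w^-1)%g * iota (T w) = 1).

Definition Cp (P : W -> W -> {poly int}) (w : W) : H :=
  (v^-1) ^+ (len gen w) *:
    fsum (fun x => if pbool (bruhat_le gen x w) then evq (P x w) *: T x else 0).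

Definition is_KL (iota : H -> H) (P : W -> W -> {poly int}) : Prop :=
  [/\ (forall w, P w w = 1),
      (forall x w, ~ bruhat_le gen x w -> P x w = 0),
      (forall x w, bruhat_le gen x w -> x <> w -> P x w != 0 ->
          (2 * (size (P x w)).-1 < len gen w - len gen x)%N) &
      (forall w, iota (Cp P w) = Cp P w)].

Definition jgen (st : S * S) : H :=
  fsum (fun w => if pbool (in_subgroup2 gen st.1 st.2 w) then T w else 0).

Definition in_J (h : H) : Prop :=
  exists l : seq (H * (S * S) * H),
    (forall z, z \in l -> J_pair gen z.1.2) /\
    h = \sum_(z <- l) z.1.1 * jgen z.1.2 * z.2.

Variables (TL : algType A) (sigma : H -> TL).

(* sigma : H -> TL is (isomorphic to) the projection H -> H / J *)
Definition is_TL_quotient : Prop :=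
  [/\ (forall a h, sigma (a *: h) = a *: sigma h),
      (forall z : TL, exists h, sigma h = z) &
      (forall h, sigma h = 0 <-> in_J h)].

Definition tTL (w : W) : TL := sigma (T w).

Definition is_D (D : W -> W -> {poly int}) : Prop :=
  (forall w, tTL w = fsum (fun x =>
      if pbool (fully_commutative gen x /\ bruhat_le gen x w)
      then evq (D x w) *: tTL x else 0)) /\
  (forall x w, fully_commutative gen x -> ~ bruhat_le gen x w -> D x w = 0).

(* a-polynomials: iota(t_w) = q^{-l(w)} sum_{y in W_c, y <= w} a_{y,w} t_y,
   where iota(t_w) = sigma (iota (T_w)) is the induced involution *)
Definition is_a (iota : H -> H) (a : W -> W -> {poly int}) : Prop :=
  (forall w, fully_commutative gen w ->
     sigma (iota (T w)) = (v^-1) ^+ (2 * len gen w) *: fsum (fun y =>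
        if pbool (fully_commutative gen y /\ bruhat_le gen y w)
        then evq (a y w) *: tTL y else 0)) /\
  (forall y w, fully_commutative gen y -> fully_commutative gen w ->
     ~ bruhat_le gen y w -> a y w = 0).

(* L-polynomials; L x w is a polynomial in q^{-1/2}, evaluated by evu *)
Definition is_L (bar : A -> A) (a L : W -> W -> {poly int}) : Prop :=
  forall x w, fully_commutative gen x -> fully_commutative gen w ->
  [/\ (~ bruhat_le gen x w -> L x w = 0),
      (x = w -> L x w = 1),
      (bruhat_le gen x w -> x <> w -> (L x w)`_0 = 0) &
      evu (L x w) = fsum (fun y =>
         if pbool (fully_commutative gen y /\ bruhat_le gen x y /\ bruhat_le gen y w)
         then v ^+ (len gen x) * (v^-1) ^+ (len gen y) * evq (a x y)
              * bar (evu (L y w))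
         else 0)].

Definition c_elt (L : W -> W -> {poly int}) (w : W) : TL :=
  fsum (fun x => if pbool (fully_commutative gen x /\ bruhat_le gen x w)
                 then ((v^-1) ^+ (len gen x) * evu (L x w)) *: tTL x else 0).

Definition condition_P (P L : W -> W -> {poly int}) : Prop :=
  (forall w, fully_commutative gen w -> sigma (Cp P w) = c_elt L w) /\
  (forall w, ~ fully_commutative gen w -> sigma (Cp P w) = 0).

End Hecke.

(* Condition (P) says sigma(C'_w) = 0.  Writing
   C'_w = q^{-l(w)/2} sum_{y <= w} P_{y,w} T_y and projecting each T_y to
   t_y = sum_{z in W_c, z <= y} D_{z,y} t_z, we get
     q^{l(w)/2} sigma(C'_w) = sum_{z in W_c} (sum_{z <= y <= w} D_{z,y} P_{y,w}) t_z,
   so by linear independence of {t_z : z in W_c} every coefficient vanishes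
   after evaluation at q; evaluation at q is injective on Z[q]. *)
From HB Require Import structures.
From mathcomp Require Import all_boot all_order all_algebra.
From Stdlib Require Import ClassicalEpsilon.
Set Implicit Arguments. Unset Strict Implicit. Unset Printing Implicit Defensive.
Import GRing.Theory.
Local Open Scope ring_scope.

Lemma pboolP (P : Prop) : reflect P (pbool P).
Proof. by rewrite /pbool; case: excluded_middle_informative => h; constructor. Qed.

Section FiniteSums.
Variables (I : eqType) (M : nmodType) (F : I -> M).

Lemma big_support_eq (s s' : seq I) :
  uniq s -> uniq s' -> (forall y, F y != 0 -> y \in s) ->
  (forall y, F y != 0 -> y \in s') ->
  \sum_(y <- s) F y = \sum_(y <- s') F y.
Proof.
move=> us us' hs hs'.
have restrict (a b : seq I) : (forall y, F y != 0 -> y \in b) ->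
    \sum_(y <- a) F y = \sum_(y <- a | y \in b) F y.
  move=> hb; rewrite [RHS]big_mkcond; apply: eq_bigr => y _.
  case: (boolP (y \in b)) => // yNb; case: (eqVneq (F y) 0) => // /hb yb.
  by rewrite yb in yNb.
rewrite (restrict s s' hs') (restrict s' s hs) -big_filter -[RHS]big_filter.
apply/perm_big/uniq_perm; rewrite ?filter_uniq // => y.
by rewrite !mem_filter andbC.
Qed.

Lemma fsum_eq (s : seq I) :
  uniq s -> (forall y, F y != 0 -> y \in s) -> fsum F = \sum_(y <- s) F y.
Proof.
move=> us hs; rewrite /fsum.
have [u1 h1] : fin_support_seq F (epsilon (inhabits [::]) (fin_support_seq F)).
  by apply: epsilon_spec; exists s.
case: pboolP => [_|no_support]; first exact: big_support_eq.
by case: no_support; split.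
Qed.

End FiniteSums.

Section Coxeter.
Variables (S : finType) (W : groupType) (gen : S -> W).
Hypothesis gen_spans : forall w : W, exists s : seq S, w = wprod gen s.

Lemma len_spec w :
  is_word_of gen w (len gen w) /\
  forall k, is_word_of gen w k -> (len gen w <= k)%N.
Proof.
rewrite /len; apply: (epsilon_spec (inhabits 0%N) (fun n =>
  is_word_of gen w n /\ forall k, is_word_of gen w k -> (n <= k)%N)).
have ex : exists n, pbool (is_word_of gen w n).
  by case: (gen_spans w) => s ->; exists (size s); apply/pboolP; exists s.
case: (ex_minnP ex) => n /pboolP hn hmin; exists n; split => // k hk.
exact/hmin/pboolP.
Qed.

Lemma bruhat_le_len x y : bruhat_le gen x y -> (len gen x <= len gen y)%N.
Proof.
elim=> [a b [t [_ [_ /ltnW //]]] | // | a b c _ h1 _ h2].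
exact: leq_trans h1 h2.
Qed.

Fixpoint words_upto (n : nat) : seq (seq S) :=
  if n is n'.+1 then [::] :: [seq a :: t | a <- enum S, t <- words_upto n']
  else [:: [::]].

Lemma mem_words_upto n s : (size s <= n)%N -> s \in words_upto n.
Proof.
elim: n s => [|n IH] [|a t] //= h; rewrite inE; apply/orP; right.
by apply: (allpairs_f (fun a t => a :: t)); rewrite ?mem_enum // IH.
Qed.

(* A finite list of elements containing every element no longer than w,
   in particular every y <= w. *)
Definition ball (w : W) : seq W :=
  undup (map (wprod gen) (words_upto (len gen w))).

Lemma ball_uniq w : uniq (ball w).
Proof. exact: undup_uniq. Qed.

Lemma mem_ball w y : (len gen y <= len gen w)%N -> y \in ball w.
Proof.
move=> h; case: (len_spec y) => [[s [size_s <-]] _].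
by rewrite mem_undup; apply/map_f/mem_words_upto; rewrite size_s.
Qed.

Lemma bruhat_mem_ball x y : bruhat_le gen x y -> x \in ball y.
Proof. by move/bruhat_le_len/mem_ball. Qed.

Lemma bruhat_interval_mem_ball x y w :
  bruhat_le gen x y -> bruhat_le gen y w -> x \in ball w.
Proof.
by move=> xy yw; apply/mem_ball/(leq_trans (bruhat_le_len xy))/bruhat_le_len.
Qed.

End Coxeter.

Section EvaluationAtQ.
Variables (A : comUnitRingType) (v : A).

Lemma evq0 : evq v 0 = 0.
Proof. by rewrite /evq rmorph0 horner0. Qed.

Lemma evqM p q : evq v (p * q) = evq v p * evq v q.
Proof. by rewrite /evq rmorphM hornerM. Qed.

Lemma evq_sum (J : Type) (r : seq J) (F : J -> {poly int}) :
  evq v (\sum_(i <- r) F i) = \sum_(i <- r) evq v (F i).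
Proof. by rewrite /evq rmorph_sum horner_sum. Qed.

Lemma evq_evv p : evq v p = evv v (p \Po 'X^2).
Proof. by rewrite /evq /evv map_comp_poly horner_comp map_polyXn hornerXn. Qed.

(* If v is transcendental over Z, so is q = v^2. *)
Lemma evq_inj p :
  (forall r : {poly int}, evv v r = 0 -> r = 0) -> evq v p = 0 -> p = 0.
Proof.
move=> evv_inj; rewrite evq_evv => /evv_inj/eqP.
by rewrite comp_poly_eq0 ?size_polyXn // => /eqP.
Qed.

End EvaluationAtQ.

Section ProjectedKL.
Variables (S : finType) (W : groupType) (gen : S -> W).
Hypothesis gen_spans : forall w : W, exists s : seq S, w = wprod gen s.
Variables (A : comUnitRingType) (v : A).
Hypothesis v_unit : v \is a GRing.unit.
Variables (H TL : algType A) (T : W -> H) (sigma : {additive H -> TL}).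
Hypothesis sigma_scale : forall a h, sigma (a *: h) = a *: sigma h.
Variables (P D : W -> W -> {poly int}).
Hypothesis D_expansion : forall w, tTL T sigma w = fsum (fun x =>
  if pbool (fully_commutative gen x /\ bruhat_le gen x w)
  then evq v (D x w) *: tTL T sigma x else 0).

Let t := tTL T sigma.
Let fc := fully_commutative gen.

Definition DP_coef (x w : W) : {poly int} :=
  fsum (fun y => if pbool (bruhat_le gen x y /\ bruhat_le gen y w)
                 then D x y * P y w else 0).

(* The coefficient vanishes unless x is in the finite list ball w,
   since x <= y <= w forces l(x) <= l(w). *)
Lemma DP_coef_outside x w : x \notin ball gen w -> DP_coef x w = 0.
Proof.
move=> xNw; rewrite /DP_coef (@fsum_eq _ _ _ [::]) ?big_nil // => y.
case: pboolP => [[xy yw]|_]; last by rewrite eqxx.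
by rewrite (bruhat_interval_mem_ball gen_spans xy yw) in xNw.
Qed.

Lemma scaled_proj_Cp w :
  v ^+ len gen w *: sigma (Cp v gen T P w) =
  \sum_(y <- ball gen w | pbool (bruhat_le gen y w)) evq v (P y w) *: t y.
Proof.
rewrite /Cp (@fsum_eq _ _ _ (ball gen w)) ?ball_uniq //; last first.
  move=> y; case: pboolP => [/bruhat_mem_ball ->|_] //; by rewrite eqxx.
rewrite sigma_scale scalerA -exprMn mulrV // expr1n scale1r.
rewrite raddf_sum [RHS]big_mkcond; apply: eq_bigr => y _.
by case: pboolP => _; rewrite ?sigma_scale ?raddf0.
Qed.

Lemma proj_Cp_expansion w :
  v ^+ len gen w *: sigma (Cp v gen T P w) =
  \sum_(z <- ball gen w | pbool (fc z)) evq v (DP_coef z w) *: t z.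
Proof.
(* c y z is the contribution of T_y to the coefficient of t_z. *)
pose c y z := if pbool (fc z /\ bruhat_le gen z y)
              then evq v (P y w) * evq v (D z y) else 0.
have t_coef y : pbool (bruhat_le gen y w) ->
    evq v (P y w) *: t y = \sum_(z <- ball gen w) c y z *: t z.
  move=> /pboolP yw; rewrite /t D_expansion (@fsum_eq _ _ _ (ball gen w));
    rewrite ?ball_uniq //; last first.
    move=> z; case: pboolP => [[_ zy] _|_]; last by rewrite eqxx.
    exact: (bruhat_interval_mem_ball gen_spans zy yw).
  rewrite scaler_sumr; apply: eq_bigr => z _; rewrite /c.
  by case: pboolP => _; rewrite ?scalerA ?scaler0 ?scale0r.
have DP_c z : fc z ->
    evq v (DP_coef z w) = \sum_(y <- ball gen w | pbool (bruhat_le gen y w)) c y z.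
  move=> fcz; rewrite /DP_coef (@fsum_eq _ _ _ (ball gen w)) ?ball_uniq //;
    last by move=> y; case: pboolP => [[_ /bruhat_mem_ball ->]|_] //; rewrite eqxx.
  rewrite evq_sum [RHS]big_mkcond; apply: eq_bigr => y _; rewrite /c.
  case: (pboolP (bruhat_le gen z y /\ _)) => [[zy yw]|zyw].
    by rewrite (introT (pboolP _) yw) (introT (pboolP _) (conj fcz zy)) evqM mulrC.
  rewrite evq0; case: (pboolP (bruhat_le gen y w)) => // yw.
  by case: pboolP => // [[_ zy]]; case: zyw.
rewrite scaled_proj_Cp (eq_bigr _ t_coef) exchange_big [RHS]big_mkcond /=.
apply: eq_bigr => z _; rewrite -scaler_suml.
case: pboolP => [/DP_c -> //|nfcz]; rewrite big1 ?scale0r // => y _.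
by rewrite /c; case: pboolP => // [[]].
Qed.

End ProjectedKL.

Theorem mainTheorem3
  (* the Coxeter graph X (Coxeter matrix m on the vertex set S) and its
     Coxeter system (W, S) *)
  (S : finType) (W : groupType) (gen : S -> W) (m : S -> S -> nat)
  (HW : coxeter_system gen m)
  (* A = Z[q^{1/2}, q^{-1/2}], v = q^{1/2}, and the bar involution *)
  (A : comUnitRingType) (v : A) (HA : laurent_ring v)
  (bar : {rmorphism A -> A}) (Hbar : bar v = v^-1)
  (* the Hecke algebra H with standard basis T and its involution iota *)
  (H : algType A) (T : W -> H) (HH : is_hecke_algebra v gen T)
  (iota : {rmorphism H -> H}) (Hiota : is_iota T bar iota)
  (* Kazhdan-Lusztig polynomials *)
  (P : W -> W -> {poly int}) (HP : is_KL v gen T iota P)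
  (* TL(X) = H / J and the projection sigma *)
  (TL : algType A) (sigma : {rmorphism H -> TL})
  (Hsigma : is_TL_quotient gen T sigma)
  (* the (known) fact that {t_w : w in W_c} is an A-basis of TL(X) *)
  (Hbasis : is_basis_on (fully_commutative gen) (tTL T sigma))
  (* the polynomials D, a, L *)
  (D : W -> W -> {poly int}) (HD : is_D v gen T sigma D)
  (a : W -> W -> {poly int}) (Ha : is_a v gen T sigma iota a)
  (L : W -> W -> {poly int}) (HL : is_L v gen bar a L)
  (* condition (P) on X *)
  (HcondP : condition_P v gen T sigma P L) :
  forall x w : W, fully_commutative gen x -> ~ fully_commutative gen w ->
    fsum (fun y : W => if pbool (bruhat_le gen x y /\ bruhat_le gen y w)
                       then D x y * P y w else 0) = 0.
Proof.
move=> x w fcx nfcw.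
case: HW => _ _ gen_spans _; case: HA => v_unit evv_inj _.
case: Hsigma => sigma_scale _ _; case: Hbasis => t_free _.
case: HD => D_expansion _; case: HcondP => _ Cp_nfc.
apply: (evq_inj evv_inj); rewrite -/(DP_coef gen P D x w).
have [xw | /(DP_coef_outside gen_spans) ->] := boolP (x \in ball gen w);
  last exact: evq0.
have expansion_vanishes : \sum_(z <- ball gen w | pbool (fully_commutative gen z))
    evq v (DP_coef gen P D z w) *: tTL T sigma z = 0.
  rewrite -(proj_Cp_expansion gen_spans v_unit sigma_scale P D_expansion w).
  by have := congr1 (fun h => v ^+ len gen w *: h) (Cp_nfc w nfcw); rewrite scaler0.
rewrite -big_filter in expansion_vanishes.
apply: (t_free _ _ (filter_uniq _ (ball_uniq gen w)) _ expansion_vanishes).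
  by move=> z; rewrite mem_filter => /andP[/pboolP].
by rewrite mem_filter xw andbT; apply/pboolP.
Qed.
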